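(* Let $n$ and $e$ be positive integers, let $s \in \{1,2,3\}$, and let $S = \{m_1,\dots,m_e\}$ be a set of integers which is a Sidon-type set of strength $s$ in $\mathbb{Z}_n$. Let $A = A(S)$ be the $2e \times n$ matrix whose rows are, in order, $s(m_1), c(m_1), s(m_2), c(m_2), \dots, s(m_e), c(m_e)$. If $f:\mathbb{R}^{2e}\to\mathbb{R}$ is a polynomial with $f \in \Phi_s$ (with respect to the variables $x_0,\dots,x_{2e-1}$), then $f(A) = 0$.
   Context: For an integer $m$, $s(m), c(m) \in \mathbb{R}^n$ are the vectors $s(m) = \big(\sin(\tfrac{2\pi}{n} km)\big)_{k=1}^n$ and $c(m) = \big(\cos(\tfrac{2\pi}{n} km)\big)_{k=1}^n$. For a matrix $U$ with columns $u_1,\dots,u_n \in \mathbb{R}^{D+1}$ and a polynomial $f(x_0,\dots,x_D)$, $f(U) = \sum_{k=1}^n f(u_k)$. In variables $x_0,\dots,x_D$: $\Phi_1 = \{x_i : 0\le i\le D\}$; $\Phi_2 = \{x_ix_j : 0\le i<j\le D\} \cup \{x_i^2 - x_{i+1}^2 : 0 \le i \le D-1\}$; $\Phi_3 = \{x_ix_jx_k : 0\le i<j<k\le D\}\cup\{x_i^3 - 3x_ix_j^2 : 0\le i\ne j\le D\}$. A set $S$ of integers is a Sidon-type set of strength $t$ in $\mathbb{Z}_n$ if no non-trivial sum $\varepsilon_1x_1+\cdots+\varepsilon_tx_t$ with $\varepsilon_i\in\{0,\pm1\}$ and $x_i\in S$ (not necessarily distinct) is congruent to $0 \bmod n$; a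 sum is non-trivial if some $\varepsilon_i \ne 0$ and no element of $S$ appears with both coefficient $+1$ and coefficient $-1$. *)

From HB Require Import structures.
From mathcomp Require Import all_boot all_order all_algebra.
From mathcomp Require Import reals trigo.
Set Implicit Arguments. Unset Strict Implicit. Unset Printing Implicit Defensive.
Import Order.TTheory GRing.Theory Num.Theory.
Local Open Scope ring_scope.

(* s(m) = (sin(2 pi k m / n))_{k=1..n}; the column index k : 'I_n stands for k+1. *)
Definition s_vec (R : realType) (n : nat) (m : int) : 'rV[R]_n :=
  \row_(k < n) sin ((2 * pi / n%:R) * ((k.+1)%:R * m%:~R)).
Definition c_vec (R : realType) (n : nat) (m : int) : 'rV[R]_n :=
  \row_(k < n) cos ((2 * pi / n%:R) * ((k.+1)%:R * m%:~R)).

(* A(S) for S = {m_1,...,m_e} given as the sequence ms = [:: m_1; ...; m_e]: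
   row 2j is s(m_{j+1}), row 2j+1 is c(m_{j+1}). *)
Definition A_mat (R : realType) (n : nat) (ms : seq int) : 'M[R]_(2 * size ms, n) :=
  \matrix_(r < 2 * size ms, k < n)
     (if odd r then c_vec R n (nth 0 ms r./2) 0 k
               else s_vec R n (nth 0 ms r./2) 0 k).

Definition evalU (R : realType) (d n : nat) (f : ('I_d -> R) -> R) (U : 'M[R]_(d, n)) : R :=
  \sum_(k < n) f (fun i => U i k).

Definition Phi (R : realType) (s d : nat) (f : ('I_d -> R) -> R) : Prop :=
  match s with
  | 1%N => exists i : 'I_d, f = fun x => x i
  | 2%N => (exists i j : 'I_d, (i < j)%N /\ f = fun x => x i * x j)
        \/ (exists i j : 'I_d, val j = (val i).+1 /\ f = fun x => x i ^+ 2 - x j ^+ 2)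
  | 3%N => (exists i j k : 'I_d, (i < j)%N /\ (j < k)%N /\ f = fun x => x i * x j * x k)
        \/ (exists i j : 'I_d, i != j /\ f = fun x => x i ^+ 3 - 3 * x i * x j ^+ 2)
  | _ => False
  end.

Definition sidon_type (S : pred int) (n t : nat) : Prop :=
  forall (x : 'I_t -> int) (eps : 'I_t -> int),
    (forall i, S (x i)) ->
    (forall i, eps i \in [:: -1; 0; 1]) ->
    (exists i, eps i != 0) ->
    (forall i j, x i = x j -> ~ (eps i = 1 /\ eps j = -1)) ->
    ~ (n%:Z %| \sum_(i < t) eps i * x i)%Z.

(* Every entry of A(S) is a wave cos(2 pi (k+1) m / n + phi) with phase
   phi = -pi/2 (sine rows) or 0 (cosine rows), and the sum over k of such a wave
   vanishes as soon as n does not divide m: multiplied by 2 sin(pi m / n) <> 0 it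
   telescopes to sin(2 pi m + ...) - sin(...) = 0.  By the product-to-sum formula, a
   product of two or three entries of a column is a combination of waves with
   frequencies m_a +- m_b (+- m_c), and the Sidon condition of strength s makes all
   of them non-zero mod n, except m_a - m_a in degree two.  That frequency
   contributes n/2 to the square of a row and cos(+-pi/2) = 0 to the product of the
   sine and cosine rows of the same m_a.  Hence rows sum to 0 (s = 1), distinct rows
   are orthogonal with squared norm n/2 (s = 2), and all products of three rows sum
   to 0 (s = 3); every element of Phi_s is a combination of such sums. *)

From HB Require Import structures.
From mathcomp Require Import all_boot all_order all_algebra.
From mathcomp Require Import reals trigo.
From mathcomp Require Import ring.
Set Implicit Arguments.
Unset Strict Implicit.
Unset Printing Implicit Defensive.

Import Order.TTheory GRing.Theory Num.Theory.
Local Open Scope ring_scope.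

Lemma periodicz (U V : zmodType) (f : U -> V) (T : U) :
  periodic f T -> forall (z : int) a, f (a + T *~ z) = f a.
Proof.
move=> fT [] k a; first exact: periodicn.
by rewrite -[in RHS](subrK (T *+ k.+1) a) periodicn // NegzE mulrNz.
Qed.

Section Trigonometry.
Variable R : realType.

Lemma cosMcos (x y : R) : cos x * cos y = (cos (x + y) + cos (x - y)) / 2.
Proof. by rewrite cosD cosB; field. Qed.

Lemma sin_half_mul_sum_cos (x phi : R) (N : nat) :
  2 * sin (x / 2) * \sum_(k < N) cos (k.+1%:R * x + phi)
  = sin (N%:R * x + x / 2 + phi) - sin (x / 2 + phi).
Proof.
pose g (j : nat) := sin (j%:R * x + x / 2 + phi).
have step k : 2 * sin (x / 2) * cos (k.+1%:R * x + phi) = g k.+1 - g k.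
  set y := k.+1%:R * x + phi.
  have -> : g k.+1 = sin (y + x / 2) by rewrite /g /y; congr sin; ring.
  have -> : g k = sin (y - x / 2) by rewrite /g /y (mulrSr 1 k); congr sin; field.
  rewrite sinD sinB; ring.
rewrite mulr_sumr (eq_bigr (fun k : 'I_N => g k.+1 - g k)) => [|k _]; last exact: step.
by rewrite -(big_mkord xpredT (fun k => g k.+1 - g k)) telescope_sumr // /g mul0r add0r.
Qed.

End Trigonometry.

Section FrequencyAngle.
Variables (R : realType) (n : nat).
Hypothesis n_gt0 : (0 < n)%N.

Definition freq_angle (k : nat) (m : int) : R := 2 * pi / n%:R * (k.+1%:R * m%:~R).

Let n_neq0 : n%:R != 0 :> R. Proof. by rewrite pnatr_eq0 -lt0n. Qed.

Lemma cos_freq_angle_modz k m phi :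
  cos (freq_angle k m + phi) = cos (freq_angle k (m %% n)%Z + phi).
Proof.
have -> : freq_angle k m = freq_angle k (m %% n)%Z + (pi *+ 2) *~ (k.+1%:Z * (m %/ n)%Z).
  rewrite {1}(divz_eq m n) /freq_angle -mulrzr !intrD !intrM /= -mulr_natr.
  by field.
by rewrite addrAC periodicz //; apply: cosD2pi.
Qed.

Lemma sum_cos_freq_angle_lt (r : int) phi : 0 < r < n%:Z ->
  \sum_(k < n) cos (freq_angle k r + phi) = 0.
Proof.
move=> /andP[r_gt0 r_ltn].
pose x : R := 2 * pi * r%:~R / n%:R.
have sin_half_gt0 : 0 < sin (x / 2).
  apply: sin_gt0_pi; have -> : x / 2 = pi * (r%:~R / n%:R) by rewrite /x; field.
  rewrite mulr_gt0 ?pi_gt0 ?divr_gt0 ?ltr0z ?ltr0n //=.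
  by rewrite gtr_pMr ?pi_gt0 // ltr_pdivrMr ?ltr0n // mul1r -[n%:R]/((n%:Z)%:~R) ltr_int.
have := sin_half_mul_sum_cos x phi n.
have -> : n%:R * x + x / 2 + phi = (x / 2 + phi) + (pi *+ 2) *~ r.
  by rewrite /x -mulrzr -mulr_natr; field.
rewrite periodicz; last exact: sinD2pi.
rewrite subrr (eq_bigr (fun k : 'I_n => cos (freq_angle k r + phi))) => [|k _].
  by move/eqP; rewrite !mulf_eq0 pnatr_eq0 (gt_eqF sin_half_gt0) /= => /eqP.
by rewrite /freq_angle /x; congr (cos (_ + _)); field.
Qed.

Lemma sum_cos_freq_angle m phi : ~~ (n%:Z %| m)%Z ->
  \sum_(k < n) cos (freq_angle k m + phi) = 0.
Proof.
move=> ndvd; under eq_bigr do rewrite cos_freq_angle_modz.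
apply: sum_cos_freq_angle_lt; rewrite ltz_pmod ?ltz_nat // andbT.
by rewrite lt_def modz_ge0 ?eqz_nat -?lt0n // andbT; apply: contraNneq ndvd => /dvdz_mod0P.
Qed.

Lemma cos_freq_angleM k a b p q :
  cos (freq_angle k a + p) * cos (freq_angle k b + q)
  = (cos (freq_angle k (a + b) + (p + q)) + cos (freq_angle k (a - b) + (p - q))) / 2.
Proof. by rewrite cosMcos /freq_angle intrD intrB; congr ((cos _ + cos _) / 2); ring. Qed.

Lemma sum_cos_freq_angleM a b p q :
  ~~ (n%:Z %| a + b)%Z -> ~~ (n%:Z %| a - b)%Z ->
  \sum_(k < n) cos (freq_angle k a + p) * cos (freq_angle k b + q) = 0.
Proof.
move=> ndvdD ndvdB; under eq_bigr do rewrite cos_freq_angleM.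
by rewrite -mulr_suml big_split /= !sum_cos_freq_angle // addr0 mul0r.
Qed.

Lemma sum_cos_freq_angleM3 a b c p q r :
  ~~ (n%:Z %| a + b + c)%Z -> ~~ (n%:Z %| a + b - c)%Z ->
  ~~ (n%:Z %| a - b + c)%Z -> ~~ (n%:Z %| a - b - c)%Z ->
  \sum_(k < n) cos (freq_angle k a + p) * cos (freq_angle k b + q)
                * cos (freq_angle k c + r) = 0.
Proof.
move=> ndvdDD ndvdDB ndvdBD ndvdBB.
under eq_bigr do rewrite cos_freq_angleM mulrAC mulrDl.
by rewrite -mulr_suml big_split /= !sum_cos_freq_angleM // addr0 mul0r.
Qed.

End FrequencyAngle.

Arguments freq_angle {R} n k m.

Section SidonType.
Variables (S : pred int) (n : nat).

Let sign_trit (e : int) : e \in [:: -1; 1] -> e \in [:: -1; 0; 1].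
Proof. by rewrite !inE => /orP[]->; rewrite ?orbT. Qed.

Lemma sidon_ndvd_term t a e : (0 < t)%N -> sidon_type S n t -> S a ->
  e \in [:: -1; 1] -> ~~ (n%:Z %| e * a)%Z.
Proof.
case: t => // t _ hs Sa he; apply/negP => dvd.
apply: (hs (fun=> a) (fun i => if val i == 0%N then e else 0)) => //.
- by move=> i; case: eqP => _; [exact: sign_trit | rewrite !inE eqxx orbT].
- by exists ord0; move: he; rewrite !inE => /orP[]/eqP->.
- by move=> i j _ []; do 2!case: eqP => _ //; move=> -> /eqP.
by rewrite big_ord_recl big1 ?addr0 // => i _; rewrite /= mul0r.
Qed.

Lemma sidon2_ndvd a b e : sidon_type S n 2 -> S a -> S b ->
  e \in [:: -1; 1] -> (a == b) ==> (e == 1) -> ~~ (n%:Z %| a + e * b)%Z.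
Proof.
move=> hs Sa Sb he ab_sign; apply/negP => dvd.
apply: (hs (fun i : 'I_2 => nth 0 [:: a; b] i) (fun i => nth 0 [:: 1; e] i)).
- by case=> [[|[|//]]].
- by case=> [[|[|//]]] //= _; rewrite sign_trit.
- by exists ord0.
- case=> [[|[|//]]] ? [[|[|//]]] ? //= eq_ab [] //.
  + by move=> _ e_m1; move: ab_sign; rewrite eq_ab e_m1 eqxx.
  + by move=> ->.
by rewrite !big_ord_recr big_ord0 /= add0r mul1r.
Qed.

Lemma sidon3_ndvd a b c e1 e2 : sidon_type S n 3 -> S a -> S b -> S c ->
  e1 \in [:: -1; 1] -> e2 \in [:: -1; 1] -> ~~ (n%:Z %| a + e1 * b + e2 * c)%Z.
Proof.
move=> hs Sa Sb Sc he1 he2; apply/negP => dvd.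
have single e z : S z -> e \in [:: -1; 1] -> ~~ (n%:Z %| e * z)%Z.
  by move=> Sz he; apply: (@sidon_ndvd_term 3).
apply: (hs (fun i : 'I_3 => nth 0 [:: a; b; c] i) (fun i => nth 0 [:: 1; e1; e2] i)).
- by case=> [[|[|[|//]]]].
- by case=> [[|[|[|//]]]] //= _; rewrite sign_trit.
- by exists ord0.
- (* a cancelling pair would leave a single term of the sum *)
  case=> [[|[|[|//]]]] ? [[|[|[|//]]]] ? //= eq_xy [] //.
  + move=> _ e1_m1; apply: (negP (single e2 c Sc he2)).
    suff E : a + e1 * b + e2 * c = e2 * c by rewrite -E.
    by rewrite eq_xy e1_m1; ring.
  + move=> _ e2_m1; apply: (negP (single e1 b Sb he1)).
    suff E : a + e1 * b + e2 * c = e1 * b by rewrite -E.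
    by rewrite eq_xy e2_m1; ring.
  + by move=> ->.
  + move=> e1_1 e2_m1; apply: (negP (single 1 a Sa isT)).
    suff E : a + e1 * b + e2 * c = 1 * a by rewrite -E.
    by rewrite eq_xy e1_1 e2_m1; ring.
  + move=> e2_1 e1_m1; apply: (negP (single 1 a Sa isT)).
    suff E : a + e1 * b + e2 * c = 1 * a by rewrite -E.
    by rewrite eq_xy e1_m1 e2_1; ring.
  + by move=> ->.
by rewrite !big_ord_recr big_ord0 /= add0r mul1r.
Qed.
End SidonType.

Section RowSums.
Variables (R : realType) (n : nat) (ms : seq int).
Hypothesis n_gt0 : (0 < n)%N.

Local Notation A := (A_mat R n ms).
Local Notation S := (fun z => z \in ms).

Definition row_freq (i : nat) : int := nth 0 ms i./2.
(* Row [2j] is [s(m)], i.e. [cos] shifted by [- pi / 2]; row [2j+1] is [c(m)]. *)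
Definition row_phase (i : nat) : R := if odd i then 0 else - (pi / 2).

Lemma A_matE i k : A i k = cos (freq_angle n k (row_freq i) + row_phase i).
Proof. by rewrite !mxE /row_freq /row_phase; case: odd; rewrite ?addr0 ?cosBpihalf. Qed.

Lemma row_freq_mem (i : 'I_(2 * size ms)) : row_freq i \in ms.
Proof. by rewrite mem_nth // ltn_half_double -mul2n. Qed.

Lemma row_freq_eq (i j : 'I_(2 * size ms)) : uniq ms ->
  (row_freq i == row_freq j) = (i./2 == j./2).
Proof. by move=> ms_uniq; rewrite nth_uniq // ltn_half_double -mul2n. Qed.

Lemma cos_row_phaseB (i j : nat) : i./2 = j./2 ->
  cos (row_phase i - row_phase j) = (i == j)%:R.
Proof.
move=> eq_half; have -> : (i == j) = (odd i == odd j).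
  apply/eqP/eqP => [-> // | eq_odd].
  by rewrite -[i]odd_double_half -[j]odd_double_half eq_half eq_odd.
rewrite /row_phase; case: (odd i); case: (odd j);
  by rewrite ?subrr ?cos0 ?sub0r ?subr0 ?opprK ?cosN ?cos_pihalf.
Qed.

Lemma sum_row : sidon_type S n 1 -> forall i : 'I_(2 * size ms),
  \sum_(k < n) A i k = 0.
Proof.
move=> hs i; under eq_bigr do rewrite A_matE.
by rewrite sum_cos_freq_angle // -[row_freq i]mul1r (sidon_ndvd_term _ hs) ?row_freq_mem.
Qed.

Lemma sum_rowM : sidon_type S n 2 -> uniq ms -> forall i j : 'I_(2 * size ms),
  \sum_(k < n) A i k * A j k = (i == j)%:R * n%:R / 2.
Proof.
move=> hs ms_uniq i j; under eq_bigr do rewrite !A_matE cos_freq_angleM.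
rewrite -mulr_suml big_split /= sum_cos_freq_angle ?add0r //; last first.
  by rewrite -[row_freq j]mul1r (sidon2_ndvd hs) ?row_freq_mem ?implybT.
have [eq_half|neq_half] := eqVneq i./2 j./2.
  have -> : row_freq j = row_freq i by rewrite /row_freq eq_half.
  under eq_bigr do rewrite subrr /freq_angle mulr0 mulr0 add0r (cos_row_phaseB eq_half).
  by rewrite sumr_const card_ord mulr_natr.
have -> : i == j = false by apply: contraNF neq_half => /eqP->.
rewrite sum_cos_freq_angle ?mul0r //.
by rewrite -mulN1r (sidon2_ndvd hs) ?row_freq_mem // row_freq_eq // (negbTE neq_half).
Qed.

Lemma sum_rowM3 : sidon_type S n 3 -> forall i j l : 'I_(2 * size ms),
  \sum_(k < n) A i k * A j k * A l k = 0.
Proof.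
move=> hs i j l; under eq_bigr do rewrite !A_matE.
have ndvd e1 e2 : e1 \in [:: -1; 1] -> e2 \in [:: -1; 1] ->
    ~~ (n%:Z %| row_freq i + e1 * row_freq j + e2 * row_freq l)%Z.
  by move=> he1 he2; rewrite (sidon3_ndvd hs) ?row_freq_mem.
apply: sum_cos_freq_angleM3 => //;
  [move: (ndvd 1 1) | move: (ndvd 1 (-1)) | move: (ndvd (-1) 1) | move: (ndvd (-1) (-1))];
  by rewrite ?mul1r ?mulN1r; apply.
Qed.

End RowSums.

Theorem lemma5p1 (R : realType) (n e s : nat) (ms : seq int)
  (hn : (0 < n)%N) (he : (0 < e)%N) (hs : s \in [:: 1%N; 2%N; 3%N])
  (hsize : size ms = e) (huniq : uniq ms)
  (hsidon : sidon_type (fun z => z \in ms) n s)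
  (f : ('I_(2 * size ms) -> R) -> R) (hf : Phi s f) :
  evalU f (A_mat R n ms) = 0.
Proof.
rewrite /evalU; set A := A_mat R n ms.
move: hs hsidon hf; rewrite !inE => /or3P[]/eqP-> hsidon /=.
- by case=> i ->; apply: sum_row.
- case=> [[i [j [lt_ij ->]]] | [i [j [_ ->]]]].
    have neq_ij : i != j by apply: contraTneq lt_ij => ->; rewrite ltnn.
    by rewrite /= sum_rowM // (negbTE neq_ij) !mul0r.
  under eq_bigr do rewrite !expr2.
  by rewrite sumrB !sum_rowM // !eqxx subrr.
- case=> [[i [j [l [_ [_ ->]]]]] | [i [j [_ ->]]]]; first exact: sum_rowM3.
  rewrite (eq_bigr (fun k => A i k * A i k * A i k - 3 * (A i k * A j k * A j k)));
    last by move=> k _; rewrite /=; ring.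
  by rewrite sumrB -mulr_sumr !sum_rowM3 // mulr0 subr0.
Qed.
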